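(* Let $g\colon\mathbb{S}^1\to\mathbb{S}^1$ be an orientation-preserving homeomorphism. If $x,y\in Z_1$, then either $d_Z(\iota_1(x),\iota_1(y))=\sigma(x,y)$, or there exist $w,w'\in\mathbb{S}^1$ with $$d_Z(\iota_1(x),\iota_1(y))=\sigma(x,w)+d_Z(\iota_1(w),\iota_1(w'))+\sigma(w',y)\le\sigma(x,y).$$ The corresponding statement holds for $x,y\in Z_2$ (with $\iota_2$). Moreover, if $x\in Z_1$ and $y\in Z_2$, there exist $w,w'\in\mathbb{S}^1$ with $$d_Z(\iota_1(x),\iota_2(y))=\sigma(x,w)+d_Z(\iota_1(w),\iota_1(w'))+\sigma(g(w'),y).$$
   Context: Let $\mathbb{S}^2\subset\mathbb{R}^3$ be the unit sphere with great-circle distance $\sigma$, $\mathbb{S}^1$ the equator, $Z_1,Z_2$ the open southern and northern hemispheres. For an orientation-preserving homeomorphism $g\colon\mathbb{S}^1\to\mathbb{S}^1$, $Z$ is obtained from $\overline Z_1\sqcup\overline Z_2$ by identifying $z\in\mathbb{S}^1\subset\overline Z_1$ with $g(z)\in\mathbb{S}^1\subset\overline Z_2$, with maps $\iota_i\colon\overline Z_i\to Z$. Define $D(x,y)=\infty$ if one point is in $\iota_1(Z_1)$ and the other in $\iota_2(Z_2)$; $D(\iota_1(a),\iota_1(b))=\min\{\sigma(a,b),\sigma(g(a),g(b))\}$ for $a,b\in\mathbb{S}^1$; otherwise $D(x,y)=\sigma(\iota_i^{-1}(x),\iota_i^{-1}(y))$ for the common $i$. $d_Z(x,y)=\inf\sum_{k=1}^nD(x_k,x_{k+1})$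 over finite chains $x=x_1,\dots,x_{n+1}=y$. *)

From HB Require Import structures.
From mathcomp Require Import all_boot all_order all_algebra.
From mathcomp Require Import all_classical all_reals.
From mathcomp Require Import ereal trigo.
Set Implicit Arguments. Unset Strict Implicit. Unset Printing Implicit Defensive.
Import Order.TTheory GRing.Theory Num.Theory.
Local Open Scope ring_scope.

Section Defs.
Variable R : realType.

Record pt := Pt { px : R; py : R; pz : R }.

Definition dot (p q : pt) : R := px p * px q + py p * py q + pz p * pz q.
Definition dist (p q : pt) : R :=
  Num.sqrt ((px p - px q) ^+ 2 + (py p - py q) ^+ 2 + (pz p - pz q) ^+ 2).

(* unit sphere S^2, equator S^1, open hemispheres Z1 (south), Z2 (north) *)
Definition sphere (p : pt) : Prop := dot p p = 1.
Definition equator (p : pt) : Prop := sphere p /\ pz p = 0.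
Definition south (p : pt) : Prop := sphere p /\ pz p < 0.
Definition north (p : pt) : Prop := sphere p /\ 0 < pz p.

Definition sigma (p q : pt) : R := acos (dot p q).

Definition circle_homeo (g : pt -> pt) : Prop :=
  [/\ (forall a, equator a -> equator (g a)),
      (forall a b, equator a -> equator b -> g a = g b -> a = b),
      (forall b, equator b -> exists2 a, equator a & g a = b),
      (forall a e, equator a -> 0 < e -> exists2 d, 0 < d &
          forall b, equator b -> dist b a < d -> dist (g b) (g a) < e) &
      (forall a e, equator a -> 0 < e -> exists2 d, 0 < d &
          forall b, equator b -> dist (g b) (g a) < d -> dist b a < e)].

(* (a, b, c) on the circle are in counterclockwise cyclic order
   iff the triangle abc is positively oriented *)
Definition ccw (a b c : pt) : Prop :=
  0 < (px b - px a) * (py c - py a) - (py b - py a) * (px c - px a).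

Definition orientation_preserving (g : pt -> pt) : Prop :=
  forall a b c, equator a -> equator b -> equator c ->
    ccw a b c -> ccw (g a) (g b) (g c).

(* Points of Z, by canonical representatives:
   ZS p  = iota_1(p) for p in the closed southern hemisphere (incl. S^1),
   ZN p  = iota_2(p) for p in the open northern hemisphere Z_2.
   (iota_2(w) for w in S^1 equals iota_1(g^-1 w).) *)
Inductive zpt := ZS of pt | ZN of pt.

Definition zvalid (x : zpt) : Prop :=
  match x with
  | ZS p => sphere p /\ pz p <= 0
  | ZN p => north p
  end.

Local Open Scope ereal_scope.

Definition D (g : pt -> pt) (x y : zpt) : \bar R :=
  match x, y with
  | ZS a, ZS b =>
      if (pz a == 0%R) && (pz b == 0%R)
      then (Num.min (sigma a b) (sigma (g a) (g b)))%:E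
      else (sigma a b)%:E
  | ZN a, ZN b => (sigma a b)%:E
  | ZS a, ZN b => if pz a == 0%R then (sigma (g a) b)%:E else +oo
  | ZN a, ZS b => if pz b == 0%R then (sigma a (g b))%:E else +oo
  end.

Fixpoint all_valid (l : seq zpt) : Prop :=
  match l with [::] => True | z :: l' => zvalid z /\ all_valid l' end.

Fixpoint chain_sum (g : pt -> pt) (x : zpt) (l : seq zpt) (y : zpt) : \bar R :=
  match l with
  | [::] => D g x y
  | z :: l' => D g x z + chain_sum g z l' y
  end.

Definition dZ (g : pt -> pt) (x y : zpt) : \bar R :=
  ereal_inf [set s | exists l : seq zpt,
                       all_valid l /\ s = chain_sum g x l y].

End Defs.

From HB Require Import structures.
From mathcomp Require Import all_boot all_order all_algebra.
From mathcomp Require Import all_classical all_reals.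
From mathcomp Require Import ereal topology normedtype derive trigo.
From mathcomp Require Import ring lra.
Import Order.TTheory GRing.Theory Num.Theory.
Import numFieldNormedType.Exports.
Set Implicit Arguments. Unset Strict Implicit. Unset Printing Implicit Defensive.
Local Open Scope classical_set_scope.
Local Open Scope ring_scope.

(* For points x, y of Z, consider the real function on S^1 x S^1
     F(w, w') = sigma(x, w) + d_Z(w, w') + sigma(w', y)
   (with w replaced by g w on the northern side).  The claim is that
   d_Z(x, y) = min(sigma(x, y), min F) for x, y in the same open hemisphere,
   and d_Z(x, y) = min F when they lie in different hemispheres; the
   statement of Lemma 3.2 is an immediate reading of these formulas.

   1. Spherical geometry: sigma is a pseudometric on S^2 (triangle
      inequality via the Gram determinant) and is continuous w.r.t. the
      chordal distance.
   2. Chains: a chain leaving an open hemisphere must cross the equator;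
      cutting it at the first and last crossing points w, w' and using the
      triangle inequality for sigma bounds its length below by F(w, w').
      A chain that never leaves the hemisphere is at least sigma(x, y).
   3. Compactness: d_Z restricted to S^1 is 1-Lipschitz for sigma in each
      variable, so F is continuous on the torus S^1 x S^1; parametrizing
      S^1 by angles in [-pi, pi], the extreme value theorem gives a
      minimizer (w0, w0').
   4. The explicit chains through w0 and w0' give the upper bound, 2. gives
      the lower bound; the three cases of the theorem follow. *)

Section SphericalDistance.
Variable R : realType.
Implicit Types a b c p q x : pt R.

Lemma dotC a b : dot a b = dot b a.
Proof. by rewrite /dot; ring. Qed.

Lemma dot_bound a b : sphere a -> sphere b -> -1 <= dot a b <= 1.
Proof.
rewrite /sphere /dot => ha hb.
have h1 : 0 <= (px a - px b)^+2 + (py a - py b)^+2 + (pz a - pz b)^+2.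
  by rewrite !addr_ge0 // sqr_ge0.
have h2 : 0 <= (px a + px b)^+2 + (py a + py b)^+2 + (pz a + pz b)^+2.
  by rewrite !addr_ge0 // sqr_ge0.
by apply/andP; split; nra.
Qed.

Lemma sigma_ge0 a b : sphere a -> sphere b -> 0 <= sigma a b.
Proof. by move=> ha hb; apply/acos_ge0/dot_bound. Qed.

Lemma sigmaC a b : sigma a b = sigma b a.
Proof. by rewrite /sigma dotC. Qed.

Lemma sigma_id a : sphere a -> sigma a a = 0.
Proof. by rewrite /sigma /sphere => ->; rewrite acos1. Qed.

Lemma gram_inequality a b c : sphere a -> sphere b -> sphere c ->
  (dot a c - dot a b * dot b c)^+2 <= (1 - (dot a b)^+2) * (1 - (dot b c)^+2).
Proof.
rewrite /sphere /dot => ha hb hc.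
set det := px a * (py b * pz c - pz b * py c) - py a * (px b * pz c - pz b * px c)
   + pz a * (px b * py c - py b * px c).
set na := px a * px a + py a * py a + pz a * pz a in ha *.
set nb := px b * px b + py b * py b + pz b * pz b in hb *.
set nc := px c * px c + py c * py c + pz c * pz c in hc *.
set p := px a * px b + py a * py b + pz a * pz b.
set q := px b * px c + py b * py c + pz b * pz c.
set r := px a * px c + py a * py c + pz a * pz c.
have gram_det :
    na * nb * nc + 2 * p * q * r - na * q^+2 - nb * r^+2 - nc * p^+2 = det^+2.
  by rewrite /na /nb /nc /p /q /r /det; ring.
rewrite ha hb hc in gram_det.
have : 0 <= det ^+ 2 by apply: sqr_ge0.
by rewrite -gram_det; nra.
Qed.

(* Triangle inequality for the great-circle distance: if the angles
   alpha = sigma(a,b), beta = sigma(b,c) sum to less than pi, then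
   cos (alpha + beta) <= <a, c> by the Gram inequality, and cos is
   decreasing on [0, pi]. *)
Lemma sigma_tri a b c : sphere a -> sphere b -> sphere c ->
  sigma a c <= sigma a b + sigma b c.
Proof.
move=> ha hb hc.
have pb := dot_bound ha hb; have qb := dot_bound hb hc; have rb := dot_bound ha hc.
have hG := gram_inequality ha hb hc.
rewrite /sigma.
set p := dot a b in pb hG *; set q := dot b c in qb hG *; set r := dot a c in rb hG *.
have [hge|hlt] := leP pi (acos p + acos q).
  by apply: le_trans hge; apply: acos_lepi.
have cos_sum_le : cos (acos p + acos q) <= r.
  rewrite cosD !acosK ?sin_acos ?inE //.
  have s1 : 0 <= 1 - p^+2 by nra.
  have s2 : 0 <= 1 - q^+2 by nra.
  rewrite -sqrtrM //.
  have : `|r - p * q| <= Num.sqrt ((1 - p ^+ 2) * (1 - q ^+ 2)).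
    by rewrite -sqrtr_sqr; apply: ler_wsqrtr.
  by rewrite ler_norml => /andP[h1 _]; lra.
have sum_in : acos p + acos q \in `[0, pi].
  by rewrite in_itv /= addr_ge0 ?acos_ge0 //= ltW.
have r_in : acos r \in `[0, pi] by rewrite in_itv /= acos_ge0 // acos_lepi.
rewrite leNgt; apply/negP => H.
by move: H; rewrite -(ltr_cos sum_in r_in) acosK ?inE //; lra.
Qed.

Lemma sigma_lip x p q : sphere x -> sphere p -> sphere q ->
  `|sigma x p - sigma x q| <= sigma p q.
Proof.
move=> hx hp hq.
have h1 := sigma_tri hx hq hp; have h2 := sigma_tri hx hp hq.
rewrite (sigmaC q p) in h1.
by rewrite ler_norml; apply/andP; split; lra.
Qed.

Lemma sigma_small eps : 0 < eps -> exists2 eta, 0 < eta &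
  forall p q, sphere p -> sphere q -> dist p q < eta -> sigma p q < eps.
Proof.
move=> e0.
pose e' := Num.min eps pi.
have pi0 : 0 < pi :> R by apply: pi_gt0.
have e'0 : 0 < e' by rewrite lt_min e0.
have e'in : e' \in `[0, pi] by rewrite in_itv /= ltW // ge_min lexx orbT.
have in0 : (0 : R) \in `[0, pi] by rewrite in_itv /= lexx ltW.
have c1 : cos e' < 1 by rewrite -cos0 (ltr_cos in0 e'in).
exists (Num.sqrt (2 - 2 * cos e')); first by rewrite sqrtr_gt0; lra.
move=> p q; rewrite /sphere /dist => hp hq.
rewrite ltr_sqrt; last lra.
have chord : (px p - px q) ^+ 2 + (py p - py q) ^+ 2 + (pz p - pz q) ^+ 2 =
  dot p p + dot q q - 2 * dot p q by rewrite /dot; ring.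
rewrite chord hp hq => hd.
have db := dot_bound hp hq.
have din : acos (dot p q) \in `[0, pi] by rewrite in_itv /= acos_ge0 // acos_lepi.
have : acos (dot p q) < e'.
  by rewrite -(ltr_cos din e'in) acosK ?in_itv //=; lra.
by rewrite /sigma => h; apply: lt_le_trans h _; rewrite ge_min lexx.
Qed.

Lemma equator_sphere a : equator a -> sphere a.
Proof. by case. Qed.

End SphericalDistance.

Section EquatorParametrization.
Variable R : realType.

Definition ept (t : R) : pt R := Pt (cos t) (sin t) 0.

Lemma ept_equator t : equator (ept t).
Proof.
split => //; rewrite /sphere /dot /= mulr0 addr0 -!expr2.
exact: cos2Dsin2.
Qed.

Lemma ept_surj (w : pt R) : equator w -> exists2 t, t \in `[- pi, pi] & w = ept t.
Proof.
case: w => a b c [] /=; rewrite /sphere /dot /= => h c0; subst c.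
have hb : b ^+ 2 = 1 - a ^+ 2 by rewrite !expr2; lra.
have ab : -1 <= a <= 1 by apply/andP; split; nra.
have ain : a \in `[-1, 1] by rewrite in_itv /=.
have sq : Num.sqrt (1 - a ^+ 2) = `|b| by rewrite -hb sqrtr_sqr.
have a0 := acos_ge0 ab; have a1 := acos_lepi ab.
have pi0 : 0 <= pi :> R by apply: pi_ge0.
have [b_ge0|b_lt0] := leP 0 b.
  exists (acos a); first by rewrite in_itv /=; apply/andP; split; lra.
  by rewrite /ept acosK // sin_acos // sq ger0_norm.
exists (- acos a); first by rewrite in_itv /=; apply/andP; split; lra.
by rewrite /ept cosN acosK // sinN sin_acos // sq ltr0_norm // opprK.
Qed.

Lemma continuity_epsdelta (f : R -> R) (s : R) : {for s, continuous f} <->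
  (forall eps, 0 < eps -> exists2 d, 0 < d &
     forall t, `|t - s| < d -> `|f t - f s| < eps).
Proof.
split.
  move=> /cvgrPdist_lt H eps e0.
  have /nbhs_ballP [d /= d0 Hd] := H eps e0.
  by exists d => // t ts; rewrite distrC; apply: Hd; rewrite /ball /= distrC.
move=> H; apply/cvgrPdist_lt => eps e0.
have [d d0 Hd] := H eps e0.
near=> t.
rewrite distrC; apply: Hd; rewrite distrC.
near: t.
by apply: filterS (nbhsx_ballx s d d0) => t; rewrite /ball.
Unshelve. all: by end_near.
Qed.

Lemma ept_cont s eta : 0 < eta -> exists2 d, 0 < d &
  forall t, `|t - s| < d -> dist (ept t) (ept s) < eta.
Proof.
move=> eta0.
have c0 : 0 < eta ^+ 2 / 2 by rewrite divr_gt0 // exprn_gt0.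
have [d d0 Hd] := (continuity_epsdelta _ _).1 (@continuous_cos R 0) _ c0.
exists d => // t ts.
have := Hd (t - s); rewrite subr0 cos0 => /(_ ts).
rewrite distrC ltr_distl => /andP[h1 h2].
rewrite /dist /ept /=.
rewrite -(ger0_norm (ltW eta0)) -sqrtr_sqr ltr_sqrt ?exprn_gt0 //.
have chord : (cos t - cos s) ^+ 2 + (sin t - sin s) ^+ 2 + (0 - 0) ^+ 2 =
  (cos t ^+ 2 + sin t ^+ 2) + (cos s ^+ 2 + sin s ^+ 2)
  - 2 * (cos t * cos s + sin t * sin s) by ring.
rewrite chord !cos2Dsin2 -cosB.
have : eta ^+ 2 = 2 * (eta ^+ 2 / 2) by field.
lra.
Qed.

Definition circle_cont (h : pt R -> pt R) : Prop :=
  (forall w, equator w -> equator (h w)) /\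
  (forall s eps, 0 < eps -> exists2 d, 0 < d &
     forall t, `|t - s| < d -> sigma (h (ept t)) (h (ept s)) < eps).

Lemma circle_cont_id : circle_cont id.
Proof.
split => // s eps e0.
have [eta eta0 Heta] := sigma_small e0.
have [d d0 Hd] := ept_cont s eta0.
by exists d => // t ts; apply: Heta; rewrite ?Hd //; apply/equator_sphere/ept_equator.
Qed.

End EquatorParametrization.

Section TwoVariableMinimum.
Variable R : realType.

(* Extreme value theorem on a square [a,b]^2 for a function that is
   continuous in the first variable uniformly in the second, and continuous
   in the second variable: minimize in the second variable first, then
   apply the one-variable theorem to the resulting (continuous) function. *)
Lemma EVT_min2 (H : R -> R -> R) (a b : R) : a <= b ->
  (forall s eps, 0 < eps -> exists2 d, 0 < d &
     forall t t', `|t - s| < d -> `|H t t' - H s t'| < eps) ->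
  (forall t s' eps, 0 < eps -> exists2 d, 0 < d &
     forall t', `|t' - s'| < d -> `|H t t' - H t s'| < eps) ->
  exists t0 t0', [/\ t0 \in `[a, b], t0' \in `[a, b] &
    forall t t', t \in `[a, b] -> t' \in `[a, b] -> H t0 t0' <= H t t'].
Proof.
move=> ab H1 H2.
have argmin2 t : {c | c \in `[a, b] & forall t', t' \in `[a, b] -> H t c <= H t t'}.
  apply: cid2; apply: EVT_min => //.
  by apply: continuous_subspaceT => s; apply/continuity_epsdelta => eps; apply: H2.
pose K t := H t (projT1 (argmin2 t)).
have K_cont : {within `[a, b], continuous K}.
  apply: continuous_subspaceT => s; apply/continuity_epsdelta => eps e0.
  have [d d0 Hd] := H1 s eps e0.
  exists d => // t ts.
  rewrite /K; case: (argmin2 t) => ct ct_in ct_min; case: (argmin2 s) => cs cs_in cs_min /=.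
  have := Hd t cs ts; have := Hd t ct ts.
  have := ct_min cs cs_in; have := cs_min ct ct_in.
  rewrite !ltr_distl => h1 h2 /andP[h3 h4] /andP[h5 h6].
  by apply/andP; split; lra.
have [t0 t0_in t0_min] := EVT_min ab K_cont.
exists t0, (projT1 (argmin2 t0)); split => //; first by case: (argmin2 t0).
move=> t t' t_in t'_in.
apply: le_trans (t0_min t t_in) _.
by rewrite /K; case: (argmin2 t) => ct _ ct_min /=; apply: ct_min.
Qed.

End TwoVariableMinimum.

Section Chains.
Local Open Scope ereal_scope.
Variable R : realType.
Context {g : pt R -> pt R}.
Hypothesis g_equator : forall a, equator a -> equator (g a).
Implicit Types (a p w x y : pt R) (l : seq (zpt R)) (s t z : zpt R).

Lemma south_sphere a : south a -> sphere a. Proof. by case. Qed.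
Lemma north_sphere a : north a -> sphere a. Proof. by case. Qed.

Lemma g_sphere a : equator a -> sphere (g a).
Proof. by move=> ea; apply/equator_sphere/g_equator. Qed.

Lemma south_pz a : south a -> (pz a == 0%R) = false.
Proof. by case=> _ h; rewrite lt_eqF. Qed.

Lemma equator_pz a : equator a -> (pz a == 0%R) = true.
Proof. by case=> _ ->; rewrite eqxx. Qed.

Lemma south_valid a : south a -> zvalid (ZS a).
Proof. by case=> h1 h2; split => //; rewrite ltW. Qed.

Lemma equator_valid a : equator a -> zvalid (ZS a).
Proof. by case=> h1 h2; split => //; rewrite h2. Qed.

Lemma ZS_cases a : zvalid (ZS a) -> equator a \/ south a.
Proof. by case=> h1; rewrite le_eqVlt => /orP[/eqP h|h]; [left | right]. Qed.

Lemma D_ge0 s t : zvalid s -> zvalid t -> 0 <= D g s t.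
Proof.
case: s => a; case: t => b /= [ha ha0] [hb hb0].
- case: ifP => [/andP[/eqP a0 /eqP b0]|_]; last by rewrite lee_fin sigma_ge0.
  by rewrite lee_fin le_min !sigma_ge0 //; apply: g_sphere.
- by case: ifP => [/eqP a0|_]; rewrite ?leey // lee_fin sigma_ge0 //; apply: g_sphere.
- by case: ifP => [/eqP b0|_]; rewrite ?leey // lee_fin sigma_ge0 //; apply: g_sphere.
- by rewrite lee_fin sigma_ge0.
Qed.

Lemma chain_ge0 l s t : zvalid s -> all_valid l -> zvalid t -> 0 <= chain_sum g s l t.
Proof.
elim: l s => [|z l IH] s /= hs; first by move=> _; apply: D_ge0.
by move=> [hz hl] ht; apply: adde_ge0; [apply: D_ge0 | apply: IH].
Qed.

Lemma chain_cat l1 z l2 s t :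
  chain_sum g s (l1 ++ z :: l2) t = chain_sum g s l1 z + chain_sum g z l2 t.
Proof. by elim: l1 s => [|u l1 IH] s //=; rewrite IH addeA. Qed.

Lemma chain_through z1 l z2 s t :
  chain_sum g s (z1 :: l ++ [:: z2]) t = D g s z1 + chain_sum g z1 l z2 + D g z2 t.
Proof. by rewrite -cat_cons chain_cat. Qed.

Lemma all_valid_cat l1 l2 : all_valid l1 -> all_valid l2 -> all_valid (l1 ++ l2).
Proof. by elim: l1 => //= z l1 IH [h1 h2] h; split => //; apply: IH. Qed.

Lemma le_pinfty_chain (c : \bar R) l z t : zvalid z -> all_valid l -> zvalid t ->
  c <= +oo + chain_sum g z l t.
Proof.
move=> hz hl ht; rewrite addye ?leey //.
by apply: contraTN (chain_ge0 hz hl ht) => /eqP ->.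
Qed.

Lemma D_equator_le a p : equator a -> equator p -> D g (ZS a) (ZS p) <= (sigma a p)%:E.
Proof. by move=> ea ep; rewrite /= equator_pz ?equator_pz //= lee_fin ge_min lexx. Qed.

Lemma chain_equator_loop a : equator a -> chain_sum g (ZS a) [::] (ZS a) = 0.
Proof.
move=> ea; rewrite /= equator_pz //= !sigma_id ?minxx //.
  exact: g_sphere.
exact: equator_sphere.
Qed.

Lemma dZ_le {l s t} : all_valid l -> dZ g s t <= chain_sum g s l t.
Proof. by move=> hl; apply: ereal_inf_lbound; exists l. Qed.

Lemma dZ_ge0 s t : zvalid s -> zvalid t -> 0 <= dZ g s t.
Proof. by move=> hs ht; apply: le_ereal_inf_tmp => _ [l [hl ->]]; apply: chain_ge0. Qed.

(* Infinite steps (jumps between the open hemispheres) make the chain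
   infinite, and any witness then works. *)
Lemma first_cross_south l x t : all_valid l -> south x -> zvalid t ->
  (exists y, t = ZS y /\ (sigma x y)%:E <= chain_sum g (ZS x) l t) \/
  exists w l2, [/\ equator w, all_valid l2 &
    (sigma x w)%:E + chain_sum g (ZS w) l2 t <= chain_sum g (ZS x) l t].
Proof.
elim: l x => [|z l IH] x /= hl hx ht.
  case: t ht => y hy /=; rewrite (south_pz hx) /=; first by left; exists y.
  by right; exists (ept 0), [::]; rewrite leey; split => //; apply: ept_equator.
case: hl => hz hl.
case: z hz => p hp /=; rewrite (south_pz hx) /=; last first.
  right; exists (ept 0), [::]; split; first exact: ept_equator; first by [].
  exact: le_pinfty_chain.
have [ep|sp] := ZS_cases hp; first by right; exists p, l.
have [[y [ty hy]]|[w [l2 [ew hl2 hw]]]] := IH p hl sp ht.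
  have sy : sphere y by move: ht; rewrite ty; case.
  left; exists y; split => //; apply: le_trans (leeD2l _ hy).
  by rewrite -EFinD lee_fin (sigma_tri (south_sphere hx) (south_sphere sp) sy).
right; exists w, l2; split => //; apply: le_trans (leeD2l _ hw).
rewrite addeA leeD2r // -EFinD lee_fin.
exact: (sigma_tri (south_sphere hx) (south_sphere sp) (equator_sphere ew)).
Qed.

Lemma last_cross_south l s y : all_valid l -> zvalid s -> south y ->
  (exists a, [/\ s = ZS a, south a & (sigma a y)%:E <= chain_sum g s l (ZS y)]) \/
  exists w' l1, [/\ equator w', all_valid l1 &
    chain_sum g s l1 (ZS w') + (sigma w' y)%:E <= chain_sum g s l (ZS y)].
Proof.
move=> + + hy; elim: l s => [|z l IH] s /= hl hs.
  case: s hs => a ha /=; rewrite (south_pz hy) ?andbF /=; last first.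
    by right; exists (ept 0), [::]; rewrite leey; split => //; apply: ept_equator.
  have [ea|sa] := ZS_cases ha; last by left; exists a.
  by right; exists a, [::]; rewrite chain_equator_loop // add0e.
case: hl => hz hl.
have [[p [-> sp hp]]|[w' [l1 [ew' hl1 hw']]]] := IH z hl hz; last first.
  right; exists w', (z :: l1); split => //=.
  by rewrite -addeA; apply: leeD2l.
case: s hs => a ha /=; rewrite (south_pz sp) ?andbF /=; last first.
  right; exists (ept 0), [::]; split; first exact: ept_equator; first by [].
  by apply: le_pinfty_chain => //; apply: south_valid.
have sigma_le : (sigma a y)%:E <= (sigma a p)%:E + chain_sum g (ZS p) l (ZS y).
  apply: le_trans (leeD2l _ hp).
  rewrite -EFinD lee_fin (sigma_tri _ (south_sphere sp) (south_sphere hy)) //.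
  by case: ha.
have [ea|sa] := ZS_cases ha; last by left; exists a.
by right; exists a, [::]; rewrite chain_equator_loop // add0e.
Qed.

(* The same two facts in the open northern hemisphere; there the equator
   point g v of S^1 is iota_1(v). *)
Lemma first_cross_north l x t : all_valid l -> north x -> zvalid t ->
  (exists y, t = ZN y /\ (sigma x y)%:E <= chain_sum g (ZN x) l t) \/
  exists v l2, [/\ equator v, all_valid l2 &
    (sigma x (g v))%:E + chain_sum g (ZS v) l2 t <= chain_sum g (ZN x) l t].
Proof.
elim: l x => [|z l IH] x /= hl hx ht.
  case: t ht => y hy /=; last by left; exists y.
  have [ey|sy] := ZS_cases hy.
    by right; exists y, [::]; rewrite (equator_pz ey) chain_equator_loop // adde0.
  by right; exists (ept 0), [::]; rewrite (south_pz sy) leey; split => //; apply: ept_equator.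
case: hl => hz hl.
case: z hz => p hp /=; last first.
  have [[y [ty hy]]|[w [l2 [ew hl2 hw]]]] := IH p hl hp ht.
    have sy : sphere y by move: ht; rewrite ty; case.
    left; exists y; split => //; apply: le_trans (leeD2l _ hy).
    by rewrite -EFinD lee_fin (sigma_tri (north_sphere hx) (north_sphere hp) sy).
  right; exists w, l2; split => //; apply: le_trans (leeD2l _ hw).
  rewrite addeA leeD2r // -EFinD lee_fin.
  exact: (sigma_tri (north_sphere hx) (north_sphere hp) (g_sphere ew)).
have [ep|sp] := ZS_cases hp; first by right; exists p, l; rewrite (equator_pz ep).
right; exists (ept 0), [::]; rewrite (south_pz sp).
by split; [exact: ept_equator | by [] | exact: le_pinfty_chain].
Qed.

Lemma last_cross_north l s y : all_valid l -> zvalid s -> north y ->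
  (exists a, [/\ s = ZN a, north a & (sigma a y)%:E <= chain_sum g s l (ZN y)]) \/
  exists v' l1, [/\ equator v', all_valid l1 &
    chain_sum g s l1 (ZS v') + (sigma (g v') y)%:E <= chain_sum g s l (ZN y)].
Proof.
move=> + + hy; elim: l s => [|z l IH] s /= hl hs.
  case: s hs => a ha /=; last by left; exists a.
  have [ea|sa] := ZS_cases ha.
    by right; exists a, [::]; rewrite (equator_pz ea) chain_equator_loop // add0e.
  by right; exists (ept 0), [::]; rewrite (south_pz sa) leey; split => //; apply: ept_equator.
case: hl => hz hl.
have [[p [-> np hp]]|[v' [l1 [ev' hl1 hv']]]] := IH z hl hz; last first.
  right; exists v', (z :: l1); split => //=.
  by rewrite -addeA; apply: leeD2l.
case: s hs => a ha /=.
  have [ea|sa] := ZS_cases ha; last first.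
    right; exists (ept 0), [::]; rewrite (south_pz sa).
    by split; [exact: ept_equator | by [] | apply: le_pinfty_chain].
  right; exists a, [::]; rewrite (equator_pz ea) chain_equator_loop // add0e.
  split => //; apply: le_trans (leeD2l _ hp).
  by rewrite -EFinD lee_fin (sigma_tri (g_sphere ea) (north_sphere np) (north_sphere hy)).
left; exists a; split => //; apply: le_trans (leeD2l _ hp).
by rewrite -EFinD lee_fin (sigma_tri (north_sphere ha) (north_sphere np) (north_sphere hy)).
Qed.

End Chains.

Section EquatorCost.
Variable R : realType.
Variable g : pt R -> pt R.
Hypothesis g_homeo : circle_homeo g.
Implicit Types (a b c w x y : pt R) (l : seq (zpt R)).

Lemma homeo_equator a : equator a -> equator (g a).
Proof. by case: g_homeo => g_eq _ _ _ _; apply: g_eq. Qed.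

Definition deq w w' : R := fine (dZ g (ZS w) (ZS w')).

Local Open Scope ereal_scope.

Lemma dZ_equator w w' : equator w -> equator w' -> dZ g (ZS w) (ZS w') = (deq w w')%:E.
Proof.
move=> ew ew'; rewrite fineK // ge0_fin_numE.
  apply: le_lt_trans (dZ_le (l := [::]) I) _.
  apply: le_lt_trans (ltry (sigma w w')).
  exact: D_equator_le ew ew'.
by apply: (dZ_ge0 homeo_equator); apply: equator_valid.
Qed.

Lemma deq_le_chain w w' l : equator w -> equator w' -> all_valid l ->
  (deq w w')%:E <= chain_sum g (ZS w) l (ZS w').
Proof. by move=> ew ew' hl; rewrite -dZ_equator //; apply: dZ_le. Qed.

Lemma le_addr_ereal_inf (S : set (\bar R)) (c : \bar R) (r : R) :
  (forall u, S u -> c <= r%:E + u) -> c <= r%:E + ereal_inf S.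
Proof.
move=> H; rewrite addeC -leeBlDr //; apply: le_ereal_inf_tmp => u Su.
by rewrite leeBlDr // addeC; apply: H.
Qed.

Lemma dZ_through (s t : zpt R) w w' (a b : R) : equator w -> equator w' ->
  D g s (ZS w) = a%:E -> D g (ZS w') t = b%:E ->
  dZ g s t <= a%:E + dZ g (ZS w) (ZS w') + b%:E.
Proof.
move=> ew ew' ha hb.
rewrite -addeA (addeC _ b%:E) addeA -EFinD.
apply: le_addr_ereal_inf => _ [l [hl ->]].
have hl' : all_valid (ZS w :: l ++ [:: ZS w']).
  split; first exact: equator_valid.
  by apply: all_valid_cat => //; split => //; apply: equator_valid.
apply: le_trans (dZ_le hl') _.
rewrite chain_through ha hb EFinD.
by rewrite -addeA (addeC _ b%:E) addeA.
Qed.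

Lemma deq_triL a b c : equator a -> equator b -> equator c ->
  (deq a c <= sigma a b + deq b c)%R.
Proof.
move=> ea eb ec; rewrite -lee_fin EFinD -!dZ_equator //.
apply: le_addr_ereal_inf => _ [l [hl ->]].
apply: le_trans (dZ_le (l := ZS b :: l) _) _; first by split => //; apply: equator_valid.
by rewrite [chain_sum _ _ (_ :: _) _]/= leeD2r // D_equator_le.
Qed.

Lemma deq_triR a b c : equator a -> equator b -> equator c ->
  (deq a c <= deq a b + sigma b c)%R.
Proof.
move=> ea eb ec; rewrite -lee_fin EFinD -!dZ_equator // addeC.
apply: le_addr_ereal_inf => _ [l [hl ->]].
apply: le_trans (dZ_le (l := l ++ [:: ZS b]) _) _.
  by apply: all_valid_cat => //; split => //; apply: equator_valid.
by rewrite chain_cat [chain_sum _ _ [::] _]/= addeC leeD2r // D_equator_le.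
Qed.

Lemma deq_lipL a b c : equator a -> equator b -> equator c ->
  (`|deq a c - deq b c| <= sigma a b)%R.
Proof.
move=> ea eb ec; have := deq_triL ea eb ec; have := deq_triL eb ea ec.
by rewrite sigmaC ler_norml => h1 h2; apply/andP; split; lra.
Qed.

Lemma deq_lipR a b c : equator a -> equator b -> equator c ->
  (`|deq a b - deq a c| <= sigma b c)%R.
Proof.
move=> ea eb ec; have := deq_triR ea eb ec; have := deq_triR ea ec eb.
by rewrite (sigmaC c b) ler_norml => h1 h2; apply/andP; split; lra.
Qed.

Lemma circle_cont_g : circle_cont g.
Proof.
split => [|s eps e0]; first exact: homeo_equator.
have [eta eta0 Heta] := sigma_small e0.
case: g_homeo => _ _ _ g_cont _.
have [d1 d10 Hd1] := g_cont (ept s) eta (ept_equator s) eta0.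
have [d d0 Hd] := ept_cont s d10.
exists d => // t ts; apply: Heta; try exact/g_sphere/ept_equator/homeo_equator.
by apply: Hd1; [apply: ept_equator | apply: Hd].
Qed.

(* The length of the cheapest route from x to y through S^1 entering at
   the point of Z represented by w and leaving at w'; the maps hA, hB
   (identity or g) give the equator point in the hemisphere of x, y. *)
Definition cross_cost x hA hB y w w' : R :=
  (sigma x (hA w) + deq w w' + sigma (hB w') y)%R.

Lemma cross_costE x hA hB y w w' : equator w -> equator w' ->
  (cross_cost x hA hB y w w')%:E =
  (sigma x (hA w))%:E + dZ g (ZS w) (ZS w') + (sigma (hB w') y)%:E.
Proof. by move=> ew ew'; rewrite dZ_equator // -!EFinD. Qed.

Lemma lt_norm_add_half (u v e : R) : (`|u| < e / 2 -> `|v| < e / 2 -> `|u + v| < e)%R.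
Proof. by rewrite !ltr_norml => /andP[? ?] /andP[? ?]; apply/andP; split; lra. Qed.

(* By compactness of S^1 x S^1 the cross cost attains its minimum: it is
   continuous since each of its three terms is 1-Lipschitz for sigma. *)
Lemma cross_cost_minimizer x hA hB y : sphere x -> sphere y ->
  circle_cont hA -> circle_cont hB ->
  exists w0 w0', [/\ equator w0, equator w0' & forall w w', equator w -> equator w' ->
    (cross_cost x hA hB y w0 w0' <= cross_cost x hA hB y w w')%R].
Proof.
move=> sx sy [hAe hAc] [hBe hBc].
pose F t t' := cross_cost x hA hB y (ept t) (ept t').
have F_cont_left s eps : (0 < eps)%R -> exists2 d, (0 < d)%R &
    forall t t', (`|t - s| < d)%R -> (`|F t t' - F s t'| < eps)%R.
  move=> e0; have e2 : (0 < eps / 2)%R by rewrite divr_gt0.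
  have [d1 d10 Hd1] := hAc s _ e2; have [d2 d20 Hd2] := (circle_cont_id R).2 s _ e2.
  exists (Num.min d1 d2); first by rewrite lt_min d10.
  move=> t t'; rewrite lt_min => /andP[h1 h2].
  have -> : (F t t' - F s t' = (sigma x (hA (ept t)) - sigma x (hA (ept s)))
      + (deq (ept t) (ept t') - deq (ept s) (ept t')))%R by rewrite /F /cross_cost; ring.
  apply: lt_norm_add_half.
    apply: le_lt_trans (sigma_lip sx (equator_sphere (hAe _ (ept_equator t)))
      (equator_sphere (hAe _ (ept_equator s)))) (Hd1 t h1).
  exact: le_lt_trans (deq_lipL (ept_equator t) (ept_equator s) (ept_equator t')) (Hd2 t h2).
have F_cont_right t s' eps : (0 < eps)%R -> exists2 d, (0 < d)%R &
    forall t', (`|t' - s'| < d)%R -> (`|F t t' - F t s'| < eps)%R.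
  move=> e0; have e2 : (0 < eps / 2)%R by rewrite divr_gt0.
  have [d1 d10 Hd1] := hBc s' _ e2; have [d2 d20 Hd2] := (circle_cont_id R).2 s' _ e2.
  exists (Num.min d1 d2); first by rewrite lt_min d10.
  move=> t'; rewrite lt_min => /andP[h1 h2].
  have -> : (F t t' - F t s' = (sigma y (hB (ept t')) - sigma y (hB (ept s')))
      + (deq (ept t) (ept t') - deq (ept t) (ept s')))%R
    by rewrite /F /cross_cost (sigmaC _ y) (sigmaC _ y); ring.
  apply: lt_norm_add_half.
    apply: le_lt_trans (sigma_lip sy (equator_sphere (hBe _ (ept_equator t')))
      (equator_sphere (hBe _ (ept_equator s')))) (Hd1 t' h1).
  exact: le_lt_trans (deq_lipR (ept_equator t) (ept_equator t') (ept_equator s')) (Hd2 t' h2).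
have hpi : (- pi <= pi :> R)%R by have := @pi_ge0 R; lra.
have [t0 [t0' [_ _ Fmin]]] := EVT_min2 hpi F_cont_left F_cont_right.
exists (ept t0), (ept t0'); split; try exact: ept_equator.
move=> w w' ew ew'.
have [t t_in ->] := ept_surj ew; have [t' t'_in ->] := ept_surj ew'.
exact: Fmin.
Qed.

Lemma dZ_min_formula (s t : zpt R) x hA hB y (base : \bar R) :
  sphere x -> sphere y -> circle_cont hA -> circle_cont hB ->
  (forall w, equator w -> D g s (ZS w) = (sigma x (hA w))%:E) ->
  (forall w', equator w' -> D g (ZS w') t = (sigma (hB w') y)%:E) ->
  dZ g s t <= base ->
  (forall l, all_valid l -> base <= chain_sum g s l t \/
     exists w w' l1, [/\ equator w, equator w', all_valid l1 &
       (sigma x (hA w))%:E + chain_sum g (ZS w) l1 (ZS w') + (sigma (hB w') y)%:E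
         <= chain_sum g s l t]) ->
  exists w0 w0', [/\ equator w0, equator w0' &
    dZ g s t = Order.min base (cross_cost x hA hB y w0 w0')%:E].
Proof.
move=> sx sy hA_cont hB_cont Dentry Dexit dZ_base chain_split.
have [w0 [w0' [ew0 ew0' cost_min]]] := cross_cost_minimizer sx sy hA_cont hB_cont.
exists w0, w0'; split => //; apply/le_anti/andP; split.
  rewrite le_min dZ_base cross_costE //.
  exact: dZ_through (Dentry _ ew0) (Dexit _ ew0').
apply: le_ereal_inf_tmp => _ [l [hl ->]].
rewrite ge_min; have [->//|[w [w' [l1 [ew ew' hl1 hle]]]]] := chain_split l hl.
apply/orP; right; apply: le_trans hle.
apply: (@le_trans _ _ (cross_cost x hA hB y w w')%:E); first by rewrite lee_fin cost_min.
by rewrite /cross_cost !EFinD leeD2r // leeD2l // deq_le_chain.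
Qed.

End EquatorCost.

Section Hemispheres.
Local Open Scope ereal_scope.
Variable R : realType.
Variable g : pt R -> pt R.
Hypothesis g_homeo : circle_homeo g.
Implicit Types x y : pt R.

(* Two points of the open southern hemisphere: the chains that stay in
   the hemisphere cost at least sigma(x, y), the others cross S^1. *)
Lemma dZ_south_south x y : south x -> south y ->
  exists w0 w0', [/\ equator w0, equator w0' &
    dZ g (ZS x) (ZS y) = Order.min (sigma x y)%:E (cross_cost g x id id y w0 w0')%:E].
Proof.
move=> hx hy.
apply: (dZ_min_formula g_homeo (south_sphere hx) (south_sphere hy)
  (circle_cont_id R) (circle_cont_id R)).
- by move=> w ew /=; rewrite (south_pz hx).
- by move=> w' ew' /=; rewrite (south_pz hy) andbF.
- by apply: le_trans (dZ_le (l := [::]) I) _; rewrite /= (south_pz hx).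
move=> l hl.
have [[_ [[<-] //]]|[w [l2 [ew hl2 hw]]]] :=
  first_cross_south (homeo_equator g_homeo) hl hx (south_valid hy); first by left.
have [[a [[<-] sw _]]|[w' [l1 [ew' hl1 hw']]]] :=
  last_cross_south (homeo_equator g_homeo) hl2 (equator_valid ew) hy.
  by case: sw => _; rewrite ew.2 ltxx.
right; exists w, w', l1; split => //; apply: le_trans hw.
by rewrite -addeA leeD2l.
Qed.

Lemma dZ_north_north x y : north x -> north y ->
  exists v0 v0', [/\ equator v0, equator v0' &
    dZ g (ZN x) (ZN y) = Order.min (sigma x y)%:E (cross_cost g x g g y v0 v0')%:E].
Proof.
move=> hx hy.
apply: (dZ_min_formula g_homeo (north_sphere hx) (north_sphere hy)
  (circle_cont_g g_homeo) (circle_cont_g g_homeo)).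
- by move=> v ev /=; rewrite (equator_pz ev).
- by move=> v' ev' /=; rewrite (equator_pz ev').
- exact: (dZ_le (l := [::]) I).
move=> l hl.
have [[_ [[<-] //]]|[v [l2 [ev hl2 hv]]]] :=
  first_cross_north (homeo_equator g_homeo) hl hx (hy : zvalid (ZN y)); first by left.
have [[a [//]]|[v' [l1 [ev' hl1 hv']]]] :=
  last_cross_north (homeo_equator g_homeo) hl2 (equator_valid ev) hy.
right; exists v, v', l1; split => //; apply: le_trans hv.
by rewrite -addeA leeD2l.
Qed.

(* Points in different hemispheres: every chain of finite length crosses
   S^1, so there is no direct term. *)
Lemma dZ_south_north x y : south x -> north y ->
  exists w0 w0', [/\ equator w0, equator w0' &
    dZ g (ZS x) (ZN y) = (cross_cost g x id g y w0 w0')%:E].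
Proof.
move=> hx hy.
have entry w : equator w -> D g (ZS x) (ZS w) = (sigma x (id w))%:E.
  by move=> _ /=; rewrite (south_pz hx).
have exit w' : equator w' -> D g (ZS w') (ZN y) = (sigma (g w') y)%:E.
  by move=> ew' /=; rewrite (equator_pz ew').
have chain_split l : all_valid l -> +oo <= chain_sum g (ZS x) l (ZN y) \/
    exists w w' l1, [/\ equator w, equator w', all_valid l1 &
      (sigma x (id w))%:E + chain_sum g (ZS w) l1 (ZS w') + (sigma (g w') y)%:E
        <= chain_sum g (ZS x) l (ZN y)].
  move=> hl.
  have [[_ [//]]|[w [l2 [ew hl2 hw]]]] :=
    first_cross_south (homeo_equator g_homeo) hl hx (hy : zvalid (ZN y)).
  have [[a [//]]|[w' [l1 [ew' hl1 hw']]]] :=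
    last_cross_north (homeo_equator g_homeo) hl2 (equator_valid ew) hy.
  right; exists w, w', l1; split => //; apply: le_trans hw.
  by rewrite -addeA leeD2l.
have [w0 [w0' [ew0 ew0' ->]]] := dZ_min_formula g_homeo (south_sphere hx)
  (north_sphere hy) (circle_cont_id R) (circle_cont_g g_homeo) entry exit (leey _) chain_split.
by exists w0, w0'; rewrite min_r ?leey.
Qed.

End Hemispheres.

Lemma min_alternative (R : realType) (b c : \bar R) :
  Order.min b c = b \/ (Order.min b c = c /\ (c <= b)%E).
Proof. by have [bc|cb] := leP b c; [left | right; split => //; apply: ltW]. Qed.

Local Open Scope ereal_scope.

Theorem lemma3p2 (R : realType) (g : pt R -> pt R) :
  circle_homeo g -> orientation_preserving g ->
  [/\ (forall x y : pt R, south x -> south y ->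
         dZ g (ZS x) (ZS y) = (sigma x y)%:E \/
         exists w w' : pt R, [/\ equator w, equator w',
           dZ g (ZS x) (ZS y) =
             (sigma x w)%:E + dZ g (ZS w) (ZS w') + (sigma w' y)%:E &
           dZ g (ZS x) (ZS y) <= (sigma x y)%:E]),
      (* Z_2 case: w = g v, w' = g v' range over S^1, and iota_2(g v) = iota_1(v) *)
      (forall x y : pt R, north x -> north y ->
         dZ g (ZN x) (ZN y) = (sigma x y)%:E \/
         exists v v' : pt R, [/\ equator v, equator v',
           dZ g (ZN x) (ZN y) =
             (sigma x (g v))%:E + dZ g (ZS v) (ZS v') + (sigma (g v') y)%:E &
           dZ g (ZN x) (ZN y) <= (sigma x y)%:E]) &
      (forall x y : pt R, south x -> north y ->
         exists w w' : pt R, [/\ equator w, equator w' &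
           dZ g (ZS x) (ZN y) =
             (sigma x w)%:E + dZ g (ZS w) (ZS w') + (sigma (g w') y)%:E])].
Proof.
move=> g_homeo _; split => x y hx hy.
- have [w0 [w0' [ew0 ew0' ->]]] := dZ_south_south g_homeo hx hy.
  have [->|[-> cost_le]] := min_alternative (sigma x y)%:E (cross_cost g x id id y w0 w0')%:E.
    by left.
  by right; exists w0, w0'; rewrite cross_costE // in cost_le *.
- have [v0 [v0' [ev0 ev0' ->]]] := dZ_north_north g_homeo hx hy.
  have [->|[-> cost_le]] := min_alternative (sigma x y)%:E (cross_cost g x g g y v0 v0')%:E.
    by left.
  by right; exists v0, v0'; rewrite cross_costE // in cost_le *.
- have [w0 [w0' [ew0 ew0' ->]]] := dZ_south_north g_homeo hx hy.
  by exists w0, w0'; rewrite cross_costE.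
Qed.
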